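(* For $r\in\mathbb{Z}$ and $\alpha=(\alpha_n)_{n\in\mathbb{Z}}\in(k^\times)^{\mathbb{Z}}$ put $r\cdot\alpha=(\alpha_{n-r})_{n\in\mathbb{Z}}$, and let $(k^\times)^{\mathbb{Z}}\rtimes\mathbb{Z}$ be the set of pairs $(\alpha,r)$ with multiplication $(\alpha,r)(\beta,t)=(\alpha\,(r\cdot\beta),\,r+t)$ (product in $(k^\times)^{\mathbb{Z}}$ componentwise). Let $\theta_r:H\to H$ be the linear map $\theta_r(x^ny^m)=x^{n+r}y^m$, and let $\phi_\alpha:H\to H$ be the linear map with $\phi_\alpha(x^n)=x^n$ and $\phi_\alpha(x^ny^m)=\big(\prod_{i=0}^{m-1}\alpha_{n+i}\big)x^ny^m$ for $m\geq1$. Then $$\Psi:(k^\times)^{\mathbb{Z}}\rtimes\mathbb{Z}\to\mathrm{Aut}_c^{gr}(H),\qquad \Psi(\alpha,r)=\phi_\alpha\theta_r,$$ is a group isomorphism.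
   Context: Let $k$ be a field and $0\neq q\in k$ not a root of unity. Let $H=k_q[x,x^{-1},y]$ be the $k$-algebra generated by $x,x^{-1},y$ subject to $xx^{-1}=x^{-1}x=1$, $yx=qxy$, a Hopf algebra with $\Delta(x)=x\otimes x$, $\Delta(x^{-1})=x^{-1}\otimes x^{-1}$, $\Delta(y)=y\otimes x+1\otimes y$, $\varepsilon(x)=1$, $\varepsilon(y)=0$. The elements $x^ny^m$ ($n\in\mathbb{Z}$, $m\in\mathbb{N}$) form a $k$-basis, and $\Delta(x^ny^m)=\sum_{i=0}^m\binom{m}{i}_q x^ny^i\otimes x^{n+i}y^{m-i}$ with $\binom{m}{i}_q$ the $q$-binomial coefficients $\frac{(m)!_q}{(i)!_q(m-i)!_q}$, $(n)_q=1+q+\dots+q^{n-1}$, $(n)!_q=(n)_q\cdots(1)_q$. Let $H_0=\mathrm{span}\{x^n\}$, $H(m)=H_0y^m$, so $H=\bigoplus_{m\ge0}H(m)$ is a graded coalgebra. $\mathrm{Aut}_c^{gr}(H)$ is the group (under composition) of coalgebra automorphisms $\phi$ of $H$ with $\phi(H(m))\subseteq H(m)$ for all $m\geq0$. *)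

From HB Require Import structures.
From mathcomp Require Import all_boot all_order all_algebra.
From mathcomp Require Import finmap.
From mathcomp Require monalg.
Import monalg.
Set Implicit Arguments. Unset Strict Implicit. Unset Printing Implicit Defensive.
Import Order.TTheory GRing.Theory Num.Theory.
Local Open Scope ring_scope.

Section Defs.
Variable k : fieldType.

(* H as a k-vector space: basis elements x^n y^m indexed by (n, m) in Z x N *)
Definition Hsp := {malg k[(int * nat)%type]}.
(* H ⊗ H: basis (x^n y^m) ⊗ (x^n' y^m') indexed by pairs of indices *)
Definition HHsp := {malg k[((int * nat) * (int * nat))%type]}.

Definition bas (p : int * nat) : Hsp := << p >>.

Definition lext (K : choiceType) (V : lmodType k) (f : K -> V)
  (v : {malg k[K]}) : V := \sum_(p <- msupp v) v@_p *: f p.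

Definition qint (q : k) (n : nat) : k := \sum_(i < n) q ^+ i.
Definition qfact (q : k) (n : nat) : k := \prod_(i < n) qint q i.+1.
Definition qbinom (q : k) (m i : nat) : k :=
  qfact q m / (qfact q i * qfact q (m - i)).

Definition Delta (q : k) : Hsp -> HHsp :=
  lext (fun p : int * nat =>
    \sum_(i < p.2.+1)
      qbinom q p.2 i *: << ((p.1, (i : nat)), (p.1 + (i : nat)%:Z, (p.2 - i)%N)) >>).

Definition eps (v : Hsp) : k := \sum_(p <- msupp v | p.2 == 0%N) v@_p.

Definition tens (a b : Hsp) : HHsp :=
  \sum_(p <- msupp a) \sum_(p' <- msupp b) (a@_p * b@_p') *: << (p, p') >>.

Definition tmap (f g : Hsp -> Hsp) : HHsp -> HHsp :=
  lext (fun pp : (int * nat) * (int * nat) => tens (f (bas pp.1)) (g (bas pp.2))).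

Definition inHm (m : nat) (v : Hsp) : Prop :=
  forall p, p \in msupp v -> p.2 = m.

Definition is_autcgr (q : k) (phi : Hsp -> Hsp) : Prop :=
  [/\ (forall (a : k) (u v : Hsp), phi (a *: u + v) = a *: phi u + phi v),
      bijective phi,
      (forall v, Delta q (phi v) = tmap phi phi (Delta q v)),
      (forall v, eps (phi v) = eps v)
    & (forall m v, inHm m v -> inHm m (phi v))].

Definition theta (r : int) : Hsp -> Hsp :=
  lext (fun p : int * nat => bas (p.1 + r, p.2)).

Definition phialpha (al : int -> k) : Hsp -> Hsp :=
  lext (fun p : int * nat => (\prod_(i < p.2) al (p.1 + (i : nat)%:Z)) *: bas p).

Definition Psi (al : int -> k) (r : int) : Hsp -> Hsp := phialpha al \o theta r.

Definition sd_mul (al : int -> k) (r : int) (be : int -> k) (t : int)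
  : (int -> k) * int := (fun n => al n * be (n - r), r + t).

End Defs.

(* A graded coalgebra automorphism [phi] maps [x^n y^m] to a nonzero multiple
   [phi_scalar n m] of [x^(phi_shift n) y^m]. Comparing the coefficients of
   [x^a y^i ⊗ x^b y^(m-i)] in [Delta (phi v) = (phi ⊗ phi) (Delta v)], after
   cancelling a q-binomial coefficient (nonzero as q is not a root of unity),
   shows that [phi_shift] is a translation by some [r] and that
   [phi_scalar n m] is the product of the [phi_scalar (n + i) 1] for [i < m]:
   that is, [phi = Psi al r] with [al t = phi_scalar (t - r) 1]. Conversely
   [Psi al r] is checked to be a graded coalgebra automorphism on the basis,
   and the product of the semidirect product is composition. *)
Set Warnings "-notation-overridden,-ambiguous-paths,-notation-incompatible-prefix".
From HB Require Import structures.
From mathcomp Require Import all_boot all_order all_algebra.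
From mathcomp Require Import finmap ring.
From mathcomp Require monalg.
Import monalg.
Set Implicit Arguments. Unset Strict Implicit. Unset Printing Implicit Defensive.
Import Order.TTheory GRing.Theory Num.Theory.
Local Open Scope ring_scope.

Section LinearExtension.
Variable k : fieldType.

Definition is_linear (U V : lmodType k) (f : U -> V) :=
  forall (a : k) (u v : U), f (a *: u + v) = a *: f u + f v.

Section LinearMaps.
Variables (U V : lmodType k) (f : U -> V).
Hypothesis f_lin : is_linear f.

Lemma is_linear0 : f 0 = 0.
Proof.
have e := f_lin 1 0 0; rewrite !scale1r addr0 in e.
by apply: (@addrI _ (f 0)); rewrite addr0 -e.
Qed.

Lemma is_linearD u v : f (u + v) = f u + f v.
Proof. by have := f_lin 1 u v; rewrite !scale1r. Qed.

Lemma is_linearZ a u : f (a *: u) = a *: f u.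
Proof. by rewrite -[a *: u]addr0 f_lin is_linear0 addr0. Qed.

Lemma is_linear_sum (I : Type) (r : seq I) (P : pred I) (F : I -> U) :
  f (\sum_(i <- r | P i) F i) = \sum_(i <- r | P i) f (F i).
Proof. exact: (big_morph f is_linearD is_linear0). Qed.

End LinearMaps.

Lemma is_linear_comp (U V W : lmodType k) (f : V -> W) (g : U -> V) :
  is_linear f -> is_linear g -> is_linear (f \o g).
Proof. by move=> hf hg a u v /=; rewrite hg hf. Qed.

Section MalgBasis.
Variables (T : choiceType) (V : lmodType k).

Lemma malgUZ (c : k) (p : T) : << c *g p >> = c *: << p >> :> {malg k[T]}.
Proof. by apply/malgP => x; rewrite mcoeffZ !mcoeffU mulr_natr. Qed.

Lemma lextEw (f : T -> V) (v : {malg k[T]}) (d : {fset T}) :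
  (msupp v `<=` d)%fset -> lext f v = \sum_(p <- d) v@_p *: f p.
Proof.
move=> le; rewrite /lext (big_fset_incl _ le) // => x _ /mcoeff_outdom ->.
by rewrite scale0r.
Qed.

Lemma lext_linear (f : T -> V) : is_linear (lext f).
Proof.
move=> a u v; set d := (msupp u `|` msupp v)%fset.
have hu : (msupp u `<=` d)%fset by apply: fsubsetUl.
have hv : (msupp v `<=` d)%fset by apply: fsubsetUr.
have huv : (msupp (a *: u + v) `<=` d)%fset.
  apply: fsubset_trans (msuppD_le _ _) _; apply/fsubUsetP; split => //.
  exact: fsubset_trans (msuppZ_le _ _) hu.
rewrite (lextEw _ huv) (lextEw _ hu) (lextEw _ hv) scaler_sumr -big_split /=.
by apply: eq_bigr => p _; rewrite mcoeffD mcoeffZ scalerDl scalerA.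
Qed.

Lemma lextU (f : T -> V) (p : T) : lext f << p >> = f p.
Proof. by rewrite (lextEw _ msuppU_le) big_seq_fset1 mcoeffUU scale1r. Qed.

Lemma linear_malgE (F : {malg k[T]} -> V) (v : {malg k[T]}) :
  is_linear F -> F v = \sum_(p <- msupp v) v@_p *: F << p >>.
Proof.
move=> hF; rewrite {1}(monalgE v) (is_linear_sum hF).
by apply: eq_bigr => p _; rewrite malgUZ (is_linearZ hF).
Qed.

Lemma linear_malg_ext (F G : {malg k[T]} -> V) :
  is_linear F -> is_linear G -> (forall p, F << p >> = G << p >>) -> F =1 G.
Proof.
move=> hF hG FG v; rewrite (linear_malgE v hF) (linear_malgE v hG).
by apply: eq_bigr => p _; rewrite FG.
Qed.

End MalgBasis.

Lemma mcoeff_sum (T : choiceType) (I : Type) (r : seq I) (P : pred I)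
    (F : I -> {malg k[T]}) (x : T) :
  (\sum_(i <- r | P i) F i)@_x = \sum_(i <- r | P i) (F i)@_x.
Proof. exact: raddf_sum. Qed.

Lemma big_msupp_delta (T : choiceType) (w : {malg k[T]}) (x : T) (G : T -> k) :
  \sum_(p <- msupp w) w@_p * ((p == x)%:R * G p) = w@_x * G x.
Proof.
have [xw|xnw] := boolP (x \in msupp w).
  rewrite (big_fsetD1 x) //= eqxx mul1r big1_fset ?addr0 // => p.
  by rewrite in_fsetD1 => /andP[/negbTE -> _] _; rewrite mul0r mulr0.
rewrite big1_fset ?mcoeff_outdom ?mul0r // => p pw _.
by case: eqP => [e|_]; [move: xnw; rewrite -e pw | rewrite mul0r mulr0].
Qed.

End LinearExtension.

Section BasisFormulas.
Variable k : fieldType.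
Local Notation idx := (int * nat)%type.
Local Notation bas := (bas k).

Lemma linear_Hsp_ext (V : lmodType k) (F G : Hsp k -> V) :
  is_linear F -> is_linear G -> (forall n m, F (bas (n, m)) = G (bas (n, m))) -> F =1 G.
Proof. by move=> hF hG FG; apply: linear_malg_ext hF hG _ => -[n m]; apply: FG. Qed.

Lemma mcoeff_tens (u v : Hsp k) (x y : idx) : (tens u v)@_(x, y) = u@_x * v@_y.
Proof.
rewrite /tens mcoeff_sum.
transitivity (\sum_(p <- msupp u) u@_p * ((p == x)%:R *
    (\sum_(p' <- msupp v) v@_p' * ((p' == y)%:R * 1)))).
  apply: eq_bigr => p _; rewrite mcoeff_sum !mulr_sumr.
  apply: eq_bigr => p' _; rewrite mcoeffZ mcoeffU xpair_eqE.
  by case: (p == x); case: (p' == y); rewrite /= ?(mulr0, mul0r, mulr1, mul1r).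
rewrite (big_msupp_delta v y (fun _ => 1)).
by rewrite (big_msupp_delta u x (fun _ => v@_y * 1)) mulr1.
Qed.

Lemma bas_neq0 (p : idx) : bas p != 0.
Proof. by rewrite /bas monalgU_eq0 oner_eq0. Qed.

Lemma mcoeff_scale_bas (c : k) (p x : idx) : (c *: bas p)@_x = c * (p == x)%:R.
Proof. by rewrite mcoeffZ mcoeffU. Qed.

Lemma tens_scale_bas (a b : k) (p p' : idx) :
  tens (a *: bas p) (b *: bas p') = (a * b) *: << (p, p') >>.
Proof.
apply/malgP => -[x y]; rewrite mcoeff_tens 2!mcoeff_scale_bas mcoeffZ mcoeffU xpair_eqE.
by case: (p == x); case: (p' == y); rewrite /= ?(mulr0, mul0r, mulr1).
Qed.

Lemma scale_bas_inj (a b : k) (p p' : idx) :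
  a != 0 -> a *: bas p = b *: bas p' -> p = p' /\ a = b.
Proof.
move=> a_neq0 /(congr1 (fun w : Hsp k => w@_p)).
rewrite [LHS]mcoeff_scale_bas [RHS]mcoeff_scale_bas eqxx mulr1.
have [-> | _] := eqVneq p' p; first by rewrite mulr1.
by rewrite mulr0 => /eqP; rewrite (negbTE a_neq0).
Qed.

Lemma Delta_linear (q : k) : is_linear (Delta q).
Proof. exact: lext_linear. Qed.

Lemma tmap_linear (f g : Hsp k -> Hsp k) : is_linear (tmap f g).
Proof. exact: lext_linear. Qed.

Lemma Delta_bas (q : k) (n : int) (m : nat) :
  Delta q (bas (n, m)) =
  \sum_(i < m.+1) qbinom q m i *: << ((n, (i : nat)), (n + (i : nat)%:Z, (m - i)%N)) >>.
Proof. exact: lextU. Qed.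

Lemma mcoeff_Delta (q : k) (w : Hsp k) (a b : int) (i j : nat) :
  (Delta q w)@_((a, i), (b, j)) =
  w@_(a, (i + j)%N) * (qbinom q (i + j) i * (b == a + i%:Z)%:R).
Proof.
have index_eq (p : idx) (l : nat) : (l <= p.2)%N ->
    (((p.1, l), (p.1 + l%:Z, (p.2 - l)%N)) == ((a, i), (b, j))) =
    [&& p == (a, (i + j)%N), l == i & b == a + i%:Z].
  case: p => p1 p2 /= le; rewrite !xpair_eqE; apply/idP/idP.
    case/andP=> /andP[/eqP <- /eqP <-] /andP[/eqP <- /eqP <-].
    by rewrite subnKC // !eqxx.
  by case/and3P=> /andP[/eqP -> /eqP ->] /eqP <- /eqP ->; rewrite addKn !eqxx.
rewrite -[RHS](big_msupp_delta w _ (fun p => qbinom q p.2 i * (b == a + i%:Z)%:R)).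
rewrite /Delta /lext mcoeff_sum; apply: eq_bigr => p _; rewrite mcoeffZ mcoeff_sum.
congr (_ * _); under eq_bigr => l _ do rewrite mcoeffZ mcoeffU (index_eq _ _ (ltn_ord l)).
have [-> /=|ne] := eqVneq p (a, (i + j)%N); last first.
  by rewrite mul0r big1 // => l _; rewrite mulr0.
have lt : (i < (i + j).+1)%N by rewrite ltnS leq_addr.
rewrite (bigD1 (Ordinal lt)) //= eqxx mul1r big1 ?addr0 // => l.
by rewrite -val_eqE /= => /negbTE ->; rewrite mulr0.
Qed.

Lemma tmap_Delta_bas (f g : Hsp k -> Hsp k) (q : k) (n : int) (m : nat) :
  tmap f g (Delta q (bas (n, m))) =
  \sum_(i < m.+1) qbinom q m i *:
     tens (f (bas (n, (i : nat)))) (g (bas (n + (i : nat)%:Z, (m - i)%N))).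
Proof.
rewrite Delta_bas (is_linear_sum (tmap_linear f g)).
by apply: eq_bigr => i _; rewrite (is_linearZ (tmap_linear f g)) /tmap lextU.
Qed.

Lemma eps_lext (v : Hsp k) : eps v = lext (fun p : idx => (p.2 == 0%N)%:R : k^o) v.
Proof.
rewrite /eps /lext big_mkcond; apply: eq_bigr => p _.
by case: (p.2 == 0%N); [exact: esym (mulr1 _) | exact: esym (mulr0 _)].
Qed.

Lemma eps_linear : is_linear (@eps k : Hsp k -> k^o).
Proof. by move=> a u v; rewrite !eps_lext lext_linear. Qed.

Lemma eps_scale_bas (c : k) (p : idx) : eps (c *: bas p) = c * (p.2 == 0%N)%:R.
Proof. by rewrite eps_lext (is_linearZ (lext_linear _)) lextU. Qed.

Lemma inHm0 m : inHm m (0 : Hsp k).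
Proof. by move=> p; rewrite msupp0 in_fset0. Qed.

Lemma inHmD m (u v : Hsp k) : inHm m u -> inHm m v -> inHm m (u + v).
Proof.
move=> hu hv p /(fsubsetP (msuppD_le _ _)).
by rewrite in_fsetU => /orP[]; [exact: hu | exact: hv].
Qed.

Lemma inHmZ m (a : k) (u : Hsp k) : inHm m u -> inHm m (a *: u).
Proof. by move=> hu p /(fsubsetP (msuppZ_le _ _)); apply: hu. Qed.

Lemma inHm_bas (n : int) (m : nat) : inHm m (bas (n, m)).
Proof. by move=> p /(fsubsetP msuppU_le); rewrite in_fset1 => /eqP ->. Qed.

Lemma linear_inHm (f : Hsp k -> Hsp k) : is_linear f ->
  (forall n m, inHm m (f (bas (n, m)))) -> forall m v, inHm m v -> inHm m (f v).
Proof.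
move=> hf fm m v hv; rewrite (linear_malgE v hf) big_seq.
apply: (big_ind (inHm m)); [exact: inHm0 | exact: inHmD |].
by move=> -[n m'] /hv /= <-; apply/inHmZ/fm.
Qed.

End BasisFormulas.

Arguments inHm_bas {k} n m [p].

Section PsiAutomorphisms.
Variable k : fieldType.
Local Notation bas := (bas k).

Lemma Psi_linear (al : int -> k) (r : int) : is_linear (Psi al r).
Proof. exact: is_linear_comp (lext_linear _) (lext_linear _). Qed.

Lemma Psi_bas (al : int -> k) (r n : int) (m : nat) :
  Psi al r (bas (n, m)) =
  (\prod_(i < m) al (n + r + (i : nat)%:Z)) *: bas (n + r, m).
Proof. by rewrite /Psi /= /theta lextU /phialpha lextU. Qed.

Lemma Psi_sd_mul (al be : int -> k) (r t : int) :
  Psi (sd_mul al r be t).1 (sd_mul al r be t).2 =1 Psi al r \o Psi be t.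
Proof.
apply: linear_Hsp_ext (Psi_linear _ _)
  (is_linear_comp (Psi_linear al r) (Psi_linear be t)) _ => n m /=.
rewrite 2!Psi_bas (is_linearZ (Psi_linear _ _)) Psi_bas scalerA.
rewrite big_split /= mulrC [r + t]addrC addrA.
rewrite (eq_bigr (fun i : 'I_m => be (n + t + (i : nat)%:Z))) => [//|i _].
by congr be; ring.
Qed.

Lemma Psi_id (al : int -> k) : (forall n, al n = 1) -> Psi al 0 =1 id.
Proof.
move=> al1; apply: linear_Hsp_ext (Psi_linear _ _) _ _ => // n m.
by rewrite Psi_bas addr0 big1 ?scale1r.
Qed.

Lemma Psi_bij (al : int -> k) (r : int) :
  (forall n, al n != 0) -> bijective (Psi al r).
Proof.
move=> al_neq0; pose al' n := (al (n + r))^-1.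
exists (Psi al' (- r)) => v.
  rewrite -[LHS]/((_ \o _) v) -Psi_sd_mul /sd_mul /= addNr Psi_id // => n.
  by rewrite /al' opprK mulVf.
rewrite -[LHS]/((_ \o _) v) -Psi_sd_mul /sd_mul /= subrr Psi_id // => n.
by rewrite /al' subrK mulfV.
Qed.

Lemma Psi_inj (al be : int -> k) (r t : int) :
  (forall n, al n != 0) -> Psi al r =1 Psi be t ->
  (forall n, al n = be n) /\ r = t.
Proof.
move=> al_neq0 PsiE.
have coef1 n : n + r = n + t /\ al (n + r) = be (n + t).
  have := PsiE (bas (n, 1%N)); rewrite !Psi_bas !big_ord1 /= !addr0.
  by case/(scale_bas_inj (al_neq0 _)) => -[->].
have rt : r = t by have [/addrI] := coef1 0.
by split => // n; have [_] := coef1 (n - r); rewrite -rt subrK.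
Qed.

Lemma prod_split_at (al : int -> k) (s : int) (m i : nat) : (i <= m)%N ->
  \prod_(j < m) al (s + (j : nat)%:Z) =
  \prod_(j < i) al (s + (j : nat)%:Z) * \prod_(j < m - i) al (s + i%:Z + (j : nat)%:Z).
Proof.
move=> le_im; move: (m - i)%N (subnKC le_im) => d <-.
rewrite big_split_ord /=; congr (_ * _).
by apply: eq_bigr => j _; rewrite PoszD addrA.
Qed.

Lemma Delta_Psi (q : k) (al : int -> k) (r : int) (v : Hsp k) :
  Delta q (Psi al r v) = tmap (Psi al r) (Psi al r) (Delta q v).
Proof.
apply: (linear_Hsp_ext (is_linear_comp (Delta_linear q) (Psi_linear al r))
         (is_linear_comp (tmap_linear _ _) (Delta_linear q))) => n m /=.
rewrite tmap_Delta_bas Psi_bas (is_linearZ (Delta_linear q)) Delta_bas scaler_sumr.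
apply: eq_bigr => i _.
rewrite 2!Psi_bas tens_scale_bas 2!scalerA [_ * qbinom _ _ _]mulrC.
rewrite (prod_split_at _ _ (ltn_ord i : (i <= m)%N)).
by rewrite addrAC.
Qed.

Lemma eps_Psi (al : int -> k) (r : int) (v : Hsp k) : eps (Psi al r v) = eps v.
Proof.
change ((@eps k \o Psi al r : Hsp k -> k^o) v = (@eps k : Hsp k -> k^o) v).
apply: (linear_Hsp_ext (is_linear_comp (@eps_linear k) (Psi_linear al r)) (@eps_linear k)).
move=> n m /=; rewrite Psi_bas [LHS]eps_scale_bas -[bas (n, m)]scale1r [RHS]eps_scale_bas.
by case: m => [|m]; rewrite /= ?big_ord0 ?mulr0n ?mulr0 ?mul1r.
Qed.

Lemma Psi_inHm (al : int -> k) (r : int) :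
  forall m v, inHm m v -> inHm m (Psi al r v).
Proof.
apply: (linear_inHm (Psi_linear al r)) => n m.
by rewrite Psi_bas; apply/inHmZ/inHm_bas.
Qed.

Lemma Psi_autcgr (q : k) (al : int -> k) (r : int) :
  (forall n, al n != 0) -> is_autcgr q (Psi al r).
Proof.
move=> al_neq0; split; [exact: Psi_linear | exact: Psi_bij | exact: Delta_Psi
  | exact: eps_Psi | exact: Psi_inHm].
Qed.

End PsiAutomorphisms.

Section QBinomial.
Variables (k : fieldType) (q : k).
Hypothesis q_not_root : forall n : nat, (0 < n)%N -> q ^+ n != 1.

Lemma qint_neq0 (n : nat) : qint q n.+1 != 0.
Proof.
apply: contra_neq (q_not_root (ltn0Sn n)) => qint_eq0.
by apply/eqP; rewrite -subr_eq0 subrX1 -/(qint q n.+1) qint_eq0 mulr0.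
Qed.

Lemma qfact_neq0 (n : nat) : qfact q n != 0.
Proof. by apply/prodf_neq0 => i _; apply: qint_neq0. Qed.

Lemma qbinom_neq0 (m i : nat) : qbinom q m i != 0.
Proof. by rewrite /qbinom mulf_neq0 ?invr_neq0 ?mulf_neq0 ?qfact_neq0. Qed.

End QBinomial.

Section GradedCoalgebraAutomorphisms.
Variables (k : fieldType) (q : k) (phi : Hsp k -> Hsp k).
Hypothesis q_not_root : forall n : nat, (0 < n)%N -> q ^+ n != 1.
Hypothesis phi_aut : is_autcgr q phi.
Local Notation bas := (bas k).

Let phi_linear : is_linear phi. Proof. by case: phi_aut. Qed.
Let phi_bij : bijective phi. Proof. by case: phi_aut. Qed.
Let Delta_phi v : Delta q (phi v) = tmap phi phi (Delta q v).
Proof. by case: phi_aut. Qed.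
Let phi_inHm m v : inHm m v -> inHm m (phi v).
Proof. by case: phi_aut => _ _ _ _; apply. Qed.

Definition phi_coef (n : int) (m : nat) (a : int) : k := (phi (bas (n, m)))@_(a, m).

Lemma mcoeff_phi_bas n i a j :
  (phi (bas (n, i)))@_(a, j) = if i == j then phi_coef n i a else 0.
Proof.
case: eqP => [<- //|ne_ij]; apply: mcoeff_outdom; apply/negP.
by move=> /(phi_inHm (inHm_bas n i)) /= /esym.
Qed.

(* The coefficient of [x^a y^i ⊗ x^b y^(m-i)] on both sides of
   [Delta (phi (x^n y^m)) = (phi ⊗ phi) (Delta (x^n y^m))]. *)
Lemma phi_coef_mul (n : int) (m i : nat) (a b : int) : (i <= m)%N ->
  phi_coef n m a * (b == a + i%:Z)%:R = phi_coef n i a * phi_coef (n + i%:Z) (m - i) b.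
Proof.
move=> le_im.
have := congr1 (fun w : HHsp k => w@_((a, i), (b, (m - i)%N))) (Delta_phi (bas (n, m))).
rewrite /= mcoeff_Delta subnKC // tmap_Delta_bas mcoeff_sum.
have lt_im : (i < m.+1)%N by rewrite ltnS.
rewrite (bigD1 (Ordinal lt_im)) //= big1 ?addr0 => [|j]; last first.
  rewrite -val_eqE /= => ne_ji.
  by rewrite mcoeffZ mcoeff_tens mcoeff_phi_bas (negbTE ne_ji) mul0r mulr0.
rewrite mcoeffZ mcoeff_tens mcoeff_phi_bas eqxx /phi_coef => e.
by apply: (mulfI (qbinom_neq0 q_not_root m i)); rewrite mulrCA.
Qed.

Lemma phi_coef_split (n : int) (m i : nat) (a : int) : (i <= m)%N ->
  phi_coef n m a = phi_coef n i a * phi_coef (n + i%:Z) (m - i) (a + i%:Z).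
Proof. by move=> le_im; rewrite -phi_coef_mul // eqxx mulr1. Qed.

Lemma phi_bas_neq0 n m : phi (bas (n, m)) != 0.
Proof.
apply: contra_neq (bas_neq0 k (n, m)) => phi_eq0.
by apply: (bij_inj phi_bij); rewrite phi_eq0 (is_linear0 phi_linear).
Qed.

Lemma exists_phi_coef_neq0 n m : exists a, phi_coef n m a != 0.
Proof.
have [supp0|[[a j] supp_aj]] := fset_0Vmem (msupp (phi (bas (n, m)))).
  by have := phi_bas_neq0 n m; rewrite (monalgE (phi _)) supp0 big_seq_fset0 eqxx.
exists a; have /= j_eq := phi_inHm (inHm_bas n m) supp_aj.
by rewrite /phi_coef mcoeff_neq0 -[X in (a, X)]j_eq.
Qed.

Definition phi_shift n := xchoose (exists_phi_coef_neq0 n 0).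

Lemma phi_coef_mul0 n m a b :
  phi_coef n m a * (b == a)%:R = phi_coef n 0 a * phi_coef n m b.
Proof. by have := phi_coef_mul n a b (leq0n m); rewrite subn0 !addr0. Qed.

Lemma phi_coef_shift n : phi_coef n 0 (phi_shift n) = 1.
Proof.
apply: (mulfI (xchooseP (exists_phi_coef_neq0 n 0))).
by rewrite -phi_coef_mul0 eqxx !mulr1.
Qed.

Lemma phi_coef_off n m b : b != phi_shift n -> phi_coef n m b = 0.
Proof.
move=> ne_b; have := phi_coef_mul0 n m (phi_shift n) b.
rewrite (negbTE ne_b) phi_coef_shift mul1r => <-.
by rewrite mulr0.
Qed.

Definition phi_scalar n m := phi_coef n m (phi_shift n).

Lemma phi_bas n m : phi (bas (n, m)) = phi_scalar n m *: bas (phi_shift n, m).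
Proof.
apply/malgP => -[a j]; rewrite mcoeff_phi_bas mcoeff_scale_bas xpair_eqE.
have [e | ne_mj] := eqVneq m j; last by rewrite andbF mulr0.
subst j; rewrite andbT /phi_scalar.
have [<- | ne_a] := eqVneq (phi_shift n) a; first by rewrite mulr1.
by rewrite mulr0 phi_coef_off // eq_sym.
Qed.

Lemma phi_scalar_neq0 n m : phi_scalar n m != 0.
Proof.
by apply: contra_neq (phi_bas_neq0 n m) => eq0; rewrite phi_bas eq0 scale0r.
Qed.

Lemma phi_shiftD n (m : nat) : phi_shift (n + m%:Z) = phi_shift n + m%:Z.
Proof.
apply/eqP; apply: contraNT (phi_scalar_neq0 n m) => ne_shift.
rewrite /phi_scalar (phi_coef_split n _ (leqnn m)) subnn.
by rewrite [phi_coef (n + _) 0 _]phi_coef_off ?mulr0 // eq_sym.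
Qed.

Lemma phi_shiftE n : phi_shift n = n + phi_shift 0.
Proof.
case: n => m; first by rewrite -[Posz m]add0r phi_shiftD addrC.
have := phi_shiftD (Negz m) m.+1; rewrite NegzE addNr => ->.
by rewrite addrC addrK.
Qed.

Lemma phi_scalarS n m : phi_scalar n m.+1 = phi_scalar n 1 * phi_scalar (n + 1) m.
Proof.
rewrite /phi_scalar (phi_coef_split n _ (ltn0Sn m)) subSS subn0.
by rewrite phi_shiftE (phi_shiftE (n + 1)) addrAC.
Qed.

Lemma phi_scalar_prod n m :
  phi_scalar n m = \prod_(i < m) phi_scalar (n + (i : nat)%:Z) 1.
Proof.
elim: m n => [|m IHm] n; first by rewrite big_ord0 /phi_scalar phi_coef_shift.
rewrite phi_scalarS big_ord_recl IHm addr0.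
by under [in RHS]eq_bigr => i _ do rewrite lift0 -addn1 PoszD addrA addrAC.
Qed.

Lemma autcgr_Psi :
  exists al r, (forall n, al n != 0) /\ (forall v, phi v = Psi al r v).
Proof.
exists (fun t => phi_scalar (t - phi_shift 0) 1), (phi_shift 0).
split=> [n | ]; first exact: phi_scalar_neq0.
apply: linear_Hsp_ext phi_linear (Psi_linear _ _) _ => n m.
rewrite phi_bas Psi_bas phi_shiftE phi_scalar_prod.
by under [in RHS]eq_bigr => i _ do rewrite addrAC addrK.
Qed.

End GradedCoalgebraAutomorphisms.

Theorem theorem2p13 (k : fieldType) (q : k) (hq0 : q != 0)
  (hq : forall n : nat, (0 < n)%N -> q ^+ n != 1) :
  [/\ (forall (al : int -> k) (r : int), (forall n, al n != 0) ->
         is_autcgr q (Psi al r)),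
      (forall (al be : int -> k) (r t : int),
         (forall n, al n != 0) -> (forall n, be n != 0) ->
         forall v, Psi (sd_mul al r be t).1 (sd_mul al r be t).2 v
                   = Psi al r (Psi be t v)),
      (forall (al be : int -> k) (r t : int),
         (forall n, al n != 0) -> (forall n, be n != 0) ->
         (forall v, Psi al r v = Psi be t v) ->
         (forall n, al n = be n) /\ r = t)
    & (forall phi : Hsp k -> Hsp k, is_autcgr q phi ->
         exists (al : int -> k) (r : int),
           (forall n, al n != 0) /\ (forall v, phi v = Psi al r v))].
Proof.
split.
- by move=> al r; apply: Psi_autcgr.
- by move=> al be r t _ _; apply: Psi_sd_mul.
- by move=> al be r t al_neq0 _; apply: Psi_inj.
- by move=> phi; apply: autcgr_Psi.
Qed.
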